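(* Let $\mathbb P$ be a forcing by Silver trees and $n<\omega$. Then: (i) if $T\in\mathbb P$ and $s\in 2^{<\omega}$ then $T\to s\in\mathbb P$; (ii) if $T$ is a Silver tree and $s_0\in 2^n$, then $T\to s_0\in\mathbb P$ if and only if $T\in\mathrm{Col}_n(\mathbb P)$; (iii) if $U\in\mathrm{Col}_n(\mathbb P)$, $s_0\in 2^n$, $S\in\mathbb P$ and $S\subseteq U\to s_0$, then there is $V\in\mathrm{Col}_n(\mathbb P)$ such that $V\sqsubseteq_n U$ and $V\to s_0=S$; (iv) if $U\in\mathrm{Col}_n(\mathbb P)$ and $D\subseteq\mathbb P$ is open dense in $\mathbb P$, then there is $V\in\mathrm{Col}_n(\mathbb P)$ such that $V\sqsubseteq_n U$ and $V\to s\in D$ for all $s\in 2^n$.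
   Context: $2^{<\omega}$ is the set of finite binary strings, $2^n$ those of length $n$, $s^\frown i$ the extension by digit $i$. A set $T\subseteq 2^{<\omega}$ is a Silver tree if there are strings $u_0,u_1,\dots$ such that $T$ consists exactly of all strings $u_0{}^\frown i_0{}^\frown u_1{}^\frown i_1{}^\frown\cdots{}^\frown u_m{}^\frown i_m$ ($m<\omega$, $i_k\in\{0,1\}$) and all their initial segments; $\mathrm{stem}(T)=u_0$; $\mathrm{spl}_m(T)=|u_0|+1+\dots+|u_{m-1}|+1+|u_m|$. For $u\in T$, $T\restriction u=\{t\in T: u\subseteq t\text{ or }t\subseteq u\}$; $T\to i=T\restriction(\mathrm{stem}(T)^\frown i)$, $T\to s=(\cdots(T\to s(0))\cdots)\to s(|s|-1)$, $T\to\Lambda=T$. String action: for $s\in 2^m$, $t\in 2^k$, $m\le k$: $(s\cdot t)(j)=t(j)+s(j)\bmod 2$ for $j<m$, $=t(j)$ otherwise; if $m>k$, $s\cdot t=(s\restriction k)\cdot t$; $s\cdot T=\{s\cdot t:t\in T\}$. A forcing by Silver trees is a set $\mathbb P$ of Silver trees closed under $T\mapsto T\restriction u$ ($u\in T$) and $T\mapsto\sigma\cdot T$ ($\sigma\in 2^{<\omega}$), ordered by inclusion (smaller is stronger); $D\subseteq\mathbb P$ is open dense if every element of $\mathbb P$ has a subset in $D$ and $D$ is closed under subsets within $\mathbb P$. $S\sqsubseteq_n T$ means $S\subseteq T$ and $\mathrm{spl}_k(S)=\mathrm{spl}_k(T)$ for all $k<n$. $\mathrm{Col}_n(\mathbb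 P)$ is the set of all Silver trees $T$ such that $T\to s\in\mathbb P$ for all $s\in 2^n$. *)

From mathcomp Require Import all_boot.
From Stdlib Require Import ClassicalEpsilon.
Set Implicit Arguments. Unset Strict Implicit. Unset Printing Implicit Defensive.

(* finite binary strings: elements of 2^{<omega}; s \in 2^n iff size s = n *)
Definition string := seq bool.
Definition tree := string -> Prop.

Definition subtree (S T : tree) : Prop := forall t, S t -> T t.

(* u_0 ^ i_0 ^ u_1 ^ i_1 ^ ... ^ u_m ^ i_m  where bs = [:: i_0; ...; i_m] *)
Fixpoint build_from (u : nat -> string) (k : nat) (bs : seq bool) : string :=
  match bs with
  | [::] => [::]
  | i :: bs' => u k ++ i :: build_from u k.+1 bs'
  end.
Definition build (u : nat -> string) (bs : seq bool) := build_from u 0 bs.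

(* the Silver tree generated by u_0, u_1, ... : all such strings and
   their initial segments *)
Definition silver_gen (u : nat -> string) : tree :=
  fun t => exists (m : nat) (bs : seq bool), size bs = m.+1 /\ prefix t (build u bs).

Definition is_silver (T : tree) : Prop := exists u, T = silver_gen u.

(* the (unique) generating sequence of a Silver tree, chosen by epsilon *)
Definition silver_code (T : tree) : nat -> string :=
  epsilon (inhabits (fun _ : nat => [::])) (fun u => T = silver_gen u).

Definition stem (T : tree) : string := silver_code T 0.

Definition spl (T : tree) (m : nat) : nat :=
  \sum_(k < m) (size (silver_code T k)).+1 + size (silver_code T m).

Definition restr (T : tree) (u : string) : tree :=
  fun t => T t /\ (prefix u t || prefix t u).

Definition arrow (T : tree) (i : bool) : tree := restr T (rcons (stem T) i).

Definition arrows (T : tree) (s : string) : tree := foldl arrow T s.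

Definition act (s t : string) : string :=
  mkseq (fun j => if j < size s then addb (nth false t j) (nth false s j)
                  else nth false t j) (size t).

Definition act_tree (s : string) (T : tree) : tree :=
  fun t => exists t', T t' /\ act s t' = t.

Definition silver_forcing (P : tree -> Prop) : Prop :=
  [/\ forall T, P T -> is_silver T,
      forall T u, P T -> T u -> P (restr T u) &
      forall T sigma, P T -> P (act_tree sigma T)].

(* D is open dense in P (D is assumed to be a subset of P separately) *)
Definition open_dense (P D : tree -> Prop) : Prop :=
  (forall T, P T -> exists S, D S /\ subtree S T) /\
  (forall S T, D T -> P S -> subtree S T -> D S).

Definition sqsub (n : nat) (S T : tree) : Prop :=
  subtree S T /\ forall k, k < n -> spl S k = spl T k.

Definition Col (n : nat) (P : tree -> Prop) : tree -> Prop :=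
  fun T => is_silver T /\ forall s : string, size s = n -> P (arrows T s).

(* A Silver tree T = silver_gen u is determined by its segments u, and
   T -> s is again a Silver tree, namely T restricted to the node build u s.
   Flipping the bits of a string at the splitting levels selected by d maps T
   onto itself and T -> s onto T -> (d . s), so all cones T -> s with |s| = n
   are translates of each other: this gives (i) and (ii).  For (iii), the stem
   of S extends that of U -> s0, so grafting the segments of S after
   u_0, ..., u_(n-1) gives V with V -> s0 = S; V is inside U because each cone
   V -> s is a translate of S by a translation that preserves U.  (iv) applies
   (iii) once for every s in 2^n; shrinking keeps the cones already put in D
   inside D, as D is open. *)

From mathcomp Require Import all_boot.
From Stdlib Require Import ClassicalEpsilon FunctionalExtensionality PropExtensionality.
Set Implicit Arguments. Unset Strict Implicit.

Lemma tree_ext (A B : tree) : (forall t, A t <-> B t) -> A = B.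
Proof.
by move=> AB; apply: functional_extensionality => t; apply: propositional_extensionality.
Qed.

Lemma prefix_leq_size (a b x : string) :
  prefix a x -> prefix b x -> size a <= size b -> prefix a b.
Proof. by rewrite !prefixE => /eqP ax /eqP bx ab; rewrite -bx take_takel // ax. Qed.

Lemma prefix_total (a b x : string) :
  prefix a x -> prefix b x -> prefix a b || prefix b a.
Proof.
move=> ax bx; case: (leqP (size a) (size b)) => [ab | /ltnW ba].
  by rewrite (prefix_leq_size ax bx ab).
by rewrite (prefix_leq_size bx ax ba) orbT.
Qed.

Lemma prefix_anti (a b : string) : prefix a b -> prefix b a -> a = b.
Proof.
move=> ab ba; have sab : size a = size b by apply/eqP; rewrite eqn_leq !size_prefix.
by move: ab; rewrite prefixE sab take_size => /eqP.
Qed.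

Lemma act0s t : act [::] t = t.
Proof. by rewrite /act (eq_mkseq (g := nth false t)) ?mkseq_nth // => j; rewrite ltn0. Qed.

Lemma acts0 s : act s [::] = [::].
Proof. by []. Qed.

Lemma size_act s t : size (act s t) = size t.
Proof. exact: size_mkseq. Qed.

Lemma act_cons b s c t : act (b :: s) (c :: t) = addb c b :: act s t.
Proof.
rewrite /act /mkseq /=; congr (_ :: _).
by rewrite -[in iota 1 _](addn0 1) iotaDl -map_comp.
Qed.

Lemma actK s : involutive (act s).
Proof.
move=> t; elim: t s => [|c t IH] [|b s]; rewrite ?act0s ?acts0 //.
by rewrite !act_cons addbK IH.
Qed.

Lemma act_cat s a b : act s (a ++ b) = act s a ++ act (drop (size a) s) b.
Proof.
elim: a s => [|c a IH] [|x s]; rewrite ?drop0 ?act0s //.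
by rewrite cat_cons !act_cons IH.
Qed.

Lemma act_prefix s t t' : prefix t t' -> prefix (act s t) (act s t').
Proof. by move=> /prefixP [c ->]; rewrite act_cat prefix_prefix. Qed.

Lemma act_nseq_false_cat s t : act (nseq (size t) false ++ s) t = t.
Proof. by elim: t => [//|c t IH]; rewrite act_cons addbF IH. Qed.

Lemma act_diff a b : size a = size b -> act (act a b) a = b.
Proof.
elim: a b => [|x a IH] [|y b] // [ab].
by rewrite !act_cons IH // addbC addbK.
Qed.

Lemma build_from_succ u k bs :
  build_from u k.+1 bs = build_from (fun j => u j.+1) k bs.
Proof. by elim: bs k => [//|b bs IH] k /=; rewrite IH. Qed.

Lemma build_cons u b bs : build u (b :: bs) = u 0 ++ b :: build (fun j => u j.+1) bs.
Proof. by rewrite /build /= build_from_succ. Qed.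

Lemma eq_build u v bs :
  (forall k, k < size bs -> u k = v k) -> build u bs = build v bs.
Proof.
elim: bs u v => [//|b bs IH] u v uv; rewrite !build_cons uv //.
by congr (_ ++ _ :: _); apply: IH => k kbs; apply: uv.
Qed.

Lemma build_cat u a b : build u (a ++ b) = build u a ++ build (fun j => u (size a + j)) b.
Proof.
elim: a u => [|x a IH] u; first exact: eq_build.
by rewrite cat_cons !build_cons IH -catA.
Qed.

Lemma prefix_build_cat u a b : prefix (build u a) (build u (a ++ b)).
Proof. by rewrite build_cat prefix_prefix. Qed.

Lemma silver_genP u t :
  silver_gen u t <-> exists2 bs, bs != [::] & prefix t (build u bs).
Proof.
split=> [[m [bs [bsm tbs]]] | [[//|b bs] _ tbs]]; last by exists (size bs), (b :: bs).
by exists bs; rewrite // -size_eq0 bsm.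
Qed.

Lemma silver_gen_build u bs : silver_gen u (build u bs).
Proof.
apply/silver_genP; exists (rcons bs false); first by rewrite -size_eq0 size_rcons.
by rewrite -cats1 prefix_build_cat.
Qed.

Lemma silver_gen_prefix u t t' : prefix t t' -> silver_gen u t' -> silver_gen u t.
Proof.
move=> tt' /silver_genP [bs bs0 t'bs]; apply/silver_genP.
by exists bs => //; apply: prefix_trans t'bs.
Qed.

Definition splitting_mask (u : nat -> string) (d : string) : string :=
  build (fun k => nseq (size (u k)) false) d.

Lemma act_splitting_mask u d bs :
  act (splitting_mask u d) (build u bs) = build u (act d bs).
Proof.
elim: bs u d => [|b bs IH] u [|e d]; rewrite ?act0s ?acts0 //.
rewrite [act (e :: d) _]act_cons /splitting_mask !build_cons act_cat.
by rewrite act_nseq_false_cat drop_size_cat ?size_nseq // act_cons IH.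
Qed.

Lemma silver_gen_act u d t :
  silver_gen u t -> silver_gen u (act (splitting_mask u d) t).
Proof.
move=> /silver_genP [bs bs0 tbs]; apply/silver_genP; exists (act d bs).
  by rewrite -size_eq0 size_act size_eq0.
by rewrite -act_splitting_mask act_prefix.
Qed.

Definition arrow_code (u : nat -> string) (i : bool) : nat -> string :=
  fun k => if k is k'.+1 then u k'.+2 else u 0 ++ i :: u 1.

Definition arrows_code (u : nat -> string) (s : string) : nat -> string :=
  foldl arrow_code u s.

Lemma build_arrow_code u i r :
  r != [::] -> build (arrow_code u i) r = build u (i :: r).
Proof. by case: r => [//|b r] _; rewrite !build_cons /= -catA. Qed.

Lemma arrows_code0 u s : arrows_code u s 0 = build u s ++ u (size s).
Proof.
elim: s u => [//|i s IH] u; rewrite [LHS]IH.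
case: s {IH} => [|j s]; first by rewrite build_cons -catA.
by rewrite build_arrow_code // build_cons.
Qed.

Lemma arrows_codeS u s k : arrows_code u s k.+1 = u (size s + k.+1).
Proof. by elim: s u => [//|i s IH] u; rewrite [LHS]IH !addnS /= addSn. Qed.

Lemma restr0 (T : tree) : restr T [::] = T.
Proof. by apply: tree_ext => t; rewrite /restr prefix0s; split => [[]|]. Qed.

Lemma restr_restr (T : tree) a b : prefix a b -> restr (restr T a) b = restr T b.
Proof.
move=> ab; apply: tree_ext => t; split=> [[[Tt _] bt] | [Tt bt]] //.
split=> //; split=> //; case/orP: bt => [bt | tb].
  by rewrite (prefix_trans ab bt).
exact: prefix_total ab tb.
Qed.

Lemma act_treeE s T t : act_tree s T t <-> T (act s t).
Proof.
by split=> [[t' [Tt' <-]] | Tst]; [rewrite actK | exists (act s t); rewrite actK].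
Qed.

Lemma act_tree_restr s (T : tree) p :
  (forall t, T t -> T (act s t)) -> act_tree s (restr T p) = restr T (act s p).
Proof.
move=> Tact; apply: tree_ext => t; rewrite act_treeE /restr.
have act_prefixE a b : prefix (act s a) b = prefix a (act s b).
  by apply/idP/idP => /(act_prefix s); rewrite actK.
rewrite act_prefixE [prefix (act s p) t]act_prefixE.
by split=> -[Tt pt]; split=> //; [rewrite -[t](actK s) |]; apply: Tact.
Qed.

Lemma prefix_rcons_build u i b bs :
  prefix (rcons (u 0) i) (build u (b :: bs)) = (b == i).
Proof.
by rewrite build_cons -cats1 prefix_catr // eqxx prefix_cons prefix0s andbT eq_sym.
Qed.

Lemma silver_gen_rcons_stem u i : silver_gen u (rcons (u 0) i).
Proof.
apply: silver_gen_prefix (silver_gen_build u [:: i]).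
by rewrite prefix_rcons_build.
Qed.

Lemma restr_silver_gen_rcons u i :
  restr (silver_gen u) (rcons (u 0) i) = silver_gen (arrow_code u i).
Proof.
have stem_arrow : prefix (rcons (u 0) i) (build (arrow_code u i) [:: false]).
  by rewrite build_arrow_code // prefix_rcons_build.
apply: tree_ext => t; split=> [[/silver_genP [[//|b bs] _ tbs] /orP [it | ti]] |].
- have /eqP bi : b == i by rewrite -(prefix_rcons_build u i b bs) (prefix_trans it tbs).
  apply/silver_genP; exists (rcons bs false); first by rewrite -size_eq0 size_rcons.
  rewrite build_arrow_code -?size_eq0 ?size_rcons // -bi.
  by apply: prefix_trans tbs _; rewrite -cats1 -cat_cons prefix_build_cat.
- by apply: silver_gen_prefix (prefix_trans ti stem_arrow) (silver_gen_build _ _).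
move=> /silver_genP [bs bs0]; rewrite build_arrow_code // => tbs; split.
  by apply/silver_genP; exists (i :: bs).
by rewrite orbC (prefix_total tbs) // prefix_rcons_build.
Qed.

Lemma silver_gen_short u t :
  silver_gen u t -> size t <= size (u 0) -> prefix t (u 0).
Proof.
move=> /silver_genP [[//|b bs] _ tbs]; apply: prefix_leq_size tbs _.
by rewrite build_cons prefix_prefix.
Qed.

Lemma prefix_stem_subtree z w :
  subtree (silver_gen z) (silver_gen w) -> prefix (w 0) (z 0).
Proof.
move=> zw; have zw_rcons b := zw _ (silver_gen_rcons_stem z b).
case: (leqP (size (w 0)) (size (z 0))) => [wz | zw_size].
  have /silver_genP [[//|b bs] _ zbs] :=
    silver_gen_prefix (prefix_rcons _ false) (zw_rcons false).
  by apply: prefix_leq_size zbs wz; rewrite build_cons prefix_prefix.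
have rcons_w b : prefix (rcons (z 0) b) (w 0).
  by apply: silver_gen_short; rewrite ?size_rcons.
have := prefix_leq_size (rcons_w false) (rcons_w true).
by rewrite !size_rcons leqnn -!cats1 prefix_catr // eqxx prefix_cons => /(_ isT).
Qed.

Lemma silver_gen_inj : injective silver_gen.
Proof.
have stem_eq u v : silver_gen u = silver_gen v -> u 0 = v 0.
  by move=> uv; apply: prefix_anti; apply: prefix_stem_subtree; rewrite uv.
move=> u v uv; apply: functional_extensionality => k.
elim: k u v uv => [|k IH] u v uv; first exact: stem_eq.
have := IH (arrow_code u false) (arrow_code v false).
rewrite -!restr_silver_gen_rcons uv (stem_eq u v uv) => /(_ erefl).
case: k {IH} => [|k] //= /eqP; rewrite (stem_eq u v uv) eqseq_cat // eqxx.
by rewrite eqseq_cons eqxx => /eqP.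
Qed.

Lemma silver_genK : cancel silver_gen silver_code.
Proof.
move=> u; apply: silver_gen_inj; symmetry.
exact: (epsilon_spec _ (fun v => silver_gen u = silver_gen v) (ex_intro _ u erefl)).
Qed.

Lemma stem_silver_gen u : stem (silver_gen u) = u 0.
Proof. by rewrite /stem silver_genK. Qed.

Lemma arrows_silver_gen u s : arrows (silver_gen u) s = silver_gen (arrows_code u s).
Proof.
elim: s u => [//|i s IH] u.
by rewrite /arrows /= /arrow stem_silver_gen restr_silver_gen_rcons -IH.
Qed.

Lemma arrows_silver_gen_restr u s :
  arrows (silver_gen u) s = restr (silver_gen u) (build u s).
Proof.
elim: s u => [|i s IH] u; first by rewrite restr0.
rewrite /arrows /= -/(arrows _ s) /arrow stem_silver_gen restr_silver_gen_rcons IH.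
rewrite -restr_silver_gen_rcons; case: s {IH} => [|j s].
  by rewrite restr0 build_cons cats1.
by rewrite build_arrow_code // restr_restr // prefix_rcons_build.
Qed.

Lemma arrows_silver_gen_act u s0 s :
  size s = size s0 ->
  arrows (silver_gen u) s =
    act_tree (splitting_mask u (act s0 s)) (arrows (silver_gen u) s0).
Proof.
move=> ss0; rewrite !arrows_silver_gen_restr act_tree_restr; last exact: silver_gen_act.
by rewrite act_splitting_mask act_diff.
Qed.

Lemma silver_gen_cover n u t :
  silver_gen u t -> exists2 s, size s = n & arrows (silver_gen u) s t.
Proof.
move=> /[dup] ut /silver_genP [bs _ tbs]; pose bs' := bs ++ nseq n false.
exists (take n bs'); first by rewrite size_takel // size_cat size_nseq leq_addl.
rewrite arrows_silver_gen_restr; split=> //.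
have tbs' : prefix t (build u bs') := prefix_trans tbs (prefix_build_cat _ _ _).
by rewrite orbC (prefix_total tbs') // -{2}(cat_take_drop n bs') prefix_build_cat.
Qed.

Lemma subtree_silver_gen_arrows u v s0 :
  (forall k, k < size s0 -> v k = u k) ->
  subtree (arrows (silver_gen v) s0) (silver_gen u) ->
  subtree (silver_gen v) (silver_gen u).
Proof.
move=> vu s0u t /(silver_gen_cover (size s0)) [s ss0].
rewrite (arrows_silver_gen_act _ ss0) act_treeE => /s0u.
have -> : splitting_mask v (act s0 s) = splitting_mask u (act s0 s).
  by apply: eq_build => k; rewrite size_act ss0 => /vu ->.
by move=> /(silver_gen_act (act s0 s)); rewrite actK.
Qed.

Definition graft (n : nat) (u : nat -> string) (x : string) (z : nat -> string) :
    nat -> string :=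
  fun k => if k < n then u k else if k == n then u n ++ x else z (k - n).

Lemma graft_lt n u x z k : k < n -> graft n u x z k = u k.
Proof. by rewrite /graft => ->. Qed.

Lemma arrows_code_graft u s0 x z :
  z 0 = build u s0 ++ u (size s0) ++ x -> arrows_code (graft (size s0) u x z) s0 = z.
Proof.
move=> z0; apply: functional_extensionality => -[|k].
  rewrite arrows_code0 z0 catA (@eq_build _ u) => [|k]; last exact: graft_lt.
  by rewrite /graft ltnn eqxx catA.
rewrite arrows_codeS /graft ltnNge leq_addr /= -{2}[size s0]addn0 eqn_add2l /=.
by rewrite addKn.
Qed.

Lemma arrows_subtree u v s :
  (forall k, k < size s -> v k = u k) -> subtree (silver_gen v) (silver_gen u) ->
  subtree (arrows (silver_gen v) s) (arrows (silver_gen u) s).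
Proof.
move=> vu uv t; rewrite !arrows_silver_gen_restr (eq_build vu).
by move=> [vt st]; split=> //; apply: uv.
Qed.

Lemma sqsub_silver_gen n u v :
  (forall k, k < n -> v k = u k) -> subtree (silver_gen v) (silver_gen u) ->
  sqsub n (silver_gen v) (silver_gen u).
Proof.
move=> vu uv; split=> // k kn; rewrite /spl !silver_genK vu //.
by congr (_ + _); apply: eq_bigr => j _; rewrite vu // (ltn_trans (ltn_ord j)).
Qed.

Section SilverForcing.

Variable P : tree -> Prop.
Hypothesis forcingP : silver_forcing P.

Lemma forcing_arrows T s : P T -> P (arrows T s).
Proof.
have [silverP restrP _] := forcingP; move=> PT; have [u Tu] := silverP T PT; subst T.
by rewrite arrows_silver_gen_restr; apply: restrP => //; apply: silver_gen_build.
Qed.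

Lemma forcing_arrows_Col n T s0 :
  is_silver T -> size s0 = n -> P (arrows T s0) <-> Col n P T.
Proof.
have [_ _ actP] := forcingP; move=> [u ->] s0n.
split=> [Ps0 | [_ ]]; last exact.
split=> [|s sn]; first by exists u.
by rewrite (arrows_silver_gen_act u (s0 := s0)) ?s0n //; apply: actP.
Qed.

Lemma Col_graft u s0 S :
  P S -> subtree S (arrows (silver_gen u) s0) ->
  exists v, [/\ forall k, k < size s0 -> v k = u k,
    subtree (silver_gen v) (silver_gen u), Col (size s0) P (silver_gen v)
    & arrows (silver_gen v) s0 = S].
Proof.
have [silverP _ _] := forcingP; move=> PS; have [z zS] := silverP S PS; subst S.
move=> zs0; have := zs0; rewrite arrows_silver_gen => /prefix_stem_subtree.
rewrite arrows_code0 => /prefixP [x z0].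
pose v := graft (size s0) u x z.
have vu k : k < size s0 -> v k = u k by apply: graft_lt.
have vs0 : arrows (silver_gen v) s0 = silver_gen z.
  by rewrite arrows_silver_gen arrows_code_graft // z0 catA.
exists v; split=> //.
- apply: subtree_silver_gen_arrows vu _; rewrite vs0 => t /zs0.
  by rewrite arrows_silver_gen_restr => -[].
- by rewrite -(@forcing_arrows_Col _ _ s0 (ex_intro _ v erefl)) // vs0.
Qed.

Lemma Col_open_dense n D (l : seq (n.-tuple bool)) u :
  (forall T, D T -> P T) -> open_dense P D -> Col n P (silver_gen u) ->
  exists v, [/\ forall k, k < n -> v k = u k,
    subtree (silver_gen v) (silver_gen u), Col n P (silver_gen v)
    & forall s, s \in l -> D (arrows (silver_gen v) s)].
Proof.
move=> DP [denseD openD]; elim: l u => [|s l IH] u uCol; first by exists u; split=> // t.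
have [S [DS Ss]] := denseD _ (proj2 uCol s (size_tuple s)).
have [w [wu wsub wCol ws]] := Col_graft (DP _ DS) Ss; rewrite size_tuple in wu wCol.
have [v [vw vsub vCol vl]] := IH w wCol.
have vu k : k < n -> v k = u k by move=> kn; rewrite vw // wu.
exists v; split=> // [t /vsub /wsub // | s'].
rewrite inE => /orP [/eqP -> | /vl //].
apply: openD DS (proj2 vCol s (size_tuple s)) _ => t.
by rewrite -ws; apply: arrows_subtree; rewrite ?size_tuple.
Qed.

End SilverForcing.

Theorem lemma6p6 (P : tree -> Prop) (n : nat) :
  silver_forcing P ->
  (* (i) *)
  (forall (T : tree) (s : string), P T -> P (arrows T s)) /\
  (* (ii) *)
  (forall (T : tree) (s0 : string), is_silver T -> size s0 = n ->
     (P (arrows T s0) <-> Col n P T)) /\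
  (* (iii) *)
  (forall (U : tree) (s0 : string) (S : tree),
     Col n P U -> size s0 = n -> P S -> subtree S (arrows U s0) ->
     exists V, Col n P V /\ sqsub n V U /\ arrows V s0 = S) /\
  (* (iv) *)
  (forall (U : tree) (D : tree -> Prop),
     Col n P U -> (forall T, D T -> P T) -> open_dense P D ->
     exists V, Col n P V /\ sqsub n V U /\
       forall s : string, size s = n -> D (arrows V s)).
Proof.
move=> forcingP; split; first exact: forcing_arrows.
split; first by move=> T s0; apply: forcing_arrows_Col.
split=> [U s0 S [[u ->] _] <- PS Ss0 | U D UCol DP HD].
  have [v [vu vsub vCol vs0]] := Col_graft forcingP PS Ss0.
  by exists (silver_gen v); split=> //; split=> //; apply: sqsub_silver_gen.
have [[u Uu] _] := UCol; subst U.
have [v [vu vsub vCol vD]] := Col_open_dense forcingP (enum {: n.-tuple bool}) DP HD UCol.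
exists (silver_gen v); split=> //; split; first exact: sqsub_silver_gen.
by move=> s /eqP sn; apply: (vD (Tuple sn)); rewrite mem_enum.
Qed.
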